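(* Let $\epsilon:B\to A$ be a local augmentation, with section $j:A\to B$ ($\epsilon j=\mathrm{id}_A$). Let $C$ be the subgroup of the group of units of $B$ generated by $$\{(1+ab)(1+ba)^{-1}\mid a,b\in B,\ \epsilon(ab)=\epsilon(ba)=0\}.$$ Then $C$ is a normal subgroup of $\epsilon^{-1}(1)$, and there is a canonical isomorphism $$K_1(B)\cong K_1(A)\oplus \frac{\epsilon^{-1}(1)}{C},$$ given on $K_1(A)$ by the map induced by $j$ and on $\epsilon^{-1}(1)/C$ by sending the class of a unit $u\in\epsilon^{-1}(1)$ to the class $[u]\in K_1(B)$ of the $1\times1$ invertible matrix $(u)$.
   Context: Rings are associative with $1$. A ring homomorphism $f:B\to A$ is local if every square matrix $\alpha$ with entries in $B$ such that $f(\alpha)$ is invertible is itself invertible. An augmentation is a pair of ring homomorphisms $\epsilon:B\to A$, $j:A\to B$ with $\epsilon j=\mathrm{id}_A$; a local augmentation is an augmentation for which $\epsilon$ is local. Note every element of $\epsilon^{-1}(1)$ is a unit of $B$. $K_1(R)$ denotes the abelianization of $\mathrm{GL}(R)=\varinjlim \mathrm{GL}_n(R)$. *)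

From mathcomp Require Import all_boot all_algebra.
Set Implicit Arguments. Unset Strict Implicit. Unset Printing Implicit Defensive.
Import GRing.Theory.
Local Open Scope ring_scope.

Section K1.
Variable R : pzRingType.

Definition invertible_mx (n : nat) (M : 'M[R]_n) : Prop :=
  exists N : 'M[R]_n, M *m N = 1%:M /\ N *m M = 1%:M.

(* Stabilisation GL_n -> GL_p (n <= p): M |-> diag(M, 1_{p-n}). *)
Definition stab (p n : nat) (M : 'M[R]_n) : 'M[R]_p :=
  \matrix_(i < p, k < p)
    match (insub (val i) : option 'I_n), (insub (val k) : option 'I_n) with
    | Some i', Some k' => M i' k'
    | _, _ => ((val i == val k)%N)%:R
    end.

Inductive commprod (p : nat) : 'M[R]_p -> Prop :=
| commprod1 : commprod 1%:M
| commprodS : forall (X g gi h hi : 'M[R]_p),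
    g *m gi = 1%:M -> gi *m g = 1%:M ->
    h *m hi = 1%:M -> hi *m h = 1%:M ->
    commprod X -> commprod (X *m (g *m h *m gi *m hi)).

(* Equality of classes in K_1(R) = GL(R)/[GL(R),GL(R)], GL(R) = colim GL_n(R):
   [M] = [N] iff after stabilising to a common size p,
   stab M * (stab N)^-1 lies in [GL_p(R), GL_p(R)]. *)
Definition K1eq (n m : nat) (M : 'M[R]_n) (N : 'M[R]_m) : Prop :=
  exists p : nat, [/\ (n <= p)%N, (m <= p)%N &
    exists X : 'M[R]_p, commprod X /\ stab p M = X *m stab p N].
End K1.

Section Aug.
Variables (A B : pzRingType) (eps : {rmorphism B -> A}).

Definition local_hom : Prop :=
  forall (n : nat) (M : 'M[B]_n), invertible_mx (map_mx eps M) -> invertible_mx M.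

(* The subgroup C of the units of B generated by the elements
   (1+ab)(1+ba)^{-1} with eps(ab) = eps(ba) = 0 (here w = (1+ba)^{-1}),
   as the set of finite words in generators and their inverses. *)
Inductive inC : B -> Prop :=
| inC1 : inC 1
| inCgen : forall x a b w : B,
    eps (a * b) = 0 -> eps (b * a) = 0 ->
    (1 + b * a) * w = 1 -> w * (1 + b * a) = 1 ->
    inC x -> inC (x * ((1 + a * b) * w))
| inCinv : forall x a b w y : B,
    eps (a * b) = 0 -> eps (b * a) = 0 ->
    (1 + b * a) * w = 1 -> w * (1 + b * a) = 1 ->
    ((1 + a * b) * w) * y = 1 -> y * ((1 + a * b) * w) = 1 ->
    inC x -> inC (x * y).

(* The map K_1(A) (+) eps^{-1}(1)/C -> K_1(B) on representatives:
   (x, u) |-> j_*[x] * [(u)], computed in GL_{n+1}(B). *)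
Definition Phi (j : {rmorphism A -> B}) (n : nat) (x : 'M[A]_n) (u : B)
  : 'M[B]_n.+1 :=
  stab n.+1 (map_mx j x) *m stab n.+1 (u%:M : 'M[B]_1).
End Aug.

(* Write an invertible matrix y over B as y = j(eps y) * P, where P is congruent
   to 1 modulo ker eps.  By locality every pivot met when eliminating P is a unit
   with eps = 1, and the product of the pivots, schur_det P, is multiplicative and
   invariant under conjugation modulo C: both facts come from the Sylvester
   relation schur_det (1 + xy) = 1 + yx (mod C), whose 1 x 1 case is the defining
   relation (1 + ab) = (1 + ba) of C.  Hence y |-> schur_det P is a homomorphism
   K_1(B) -> eps^-1(1)/C, which recovers u from j_*[x][(u)] (injectivity), while
   the LDU factorisation of P gives [P] = [(schur_det P)] (surjectivity).  Finally
   C dies in K_1(B) by the Whitehead lemma: diag(1 + ab, (1 + ba)^-1) is a product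
   of elementary matrices. *)

From mathcomp Require Import all_boot all_algebra.
From Stdlib Require Import ClassicalEpsilon.
Set Implicit Arguments. Unset Strict Implicit. Unset Printing Implicit Defensive.
Import GRing.Theory.
Local Open Scope ring_scope.

(** * Stabilisation and the commutator subgroup *)

Section Stabilisation.
Variable R : pzRingType.

Lemma stab_addn n k (M : 'M[R]_n) : stab (n + k) M = block_mx M 0 0 1%:M.
Proof.
apply/matrixP=> i j; rewrite -[i]splitK -[j]splitK.
case: (split i) => i'; case: (split j) => j' /=;
  rewrite ?block_mxEul ?block_mxEur ?block_mxEdl ?block_mxEdr !mxE /=.
- rewrite insubT ?ltn_ord //= => Hi'; rewrite insubT ?ltn_ord //= => Hj'.
  by congr (M _ _); apply: val_inj.
- rewrite insubT ?ltn_ord //= => Hi'; rewrite insubF ?ltnNge ?leq_addr //=.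
  by case: eqP => // E; move: (ltn_ord i'); rewrite E ltnNge leq_addr.
- rewrite insubF ?ltnNge ?leq_addr //=.
  by case: eqP => // E; move: (ltn_ord j'); rewrite -E ltnNge leq_addr.
- by rewrite insubF ?ltnNge ?leq_addr //= eqn_add2l.
Qed.

Lemma stab_id n (M : 'M[R]_n) : stab n M = M.
Proof.
apply/matrixP=> i j; rewrite !mxE insubT ?ltn_ord //= => Hi.
by rewrite insubT ?ltn_ord //= => Hj; congr (M _ _); apply: val_inj.
Qed.

Lemma stabM n p (M N : 'M[R]_n) : (n <= p)%N ->
  stab p (M *m N) = stab p M *m stab p N.
Proof.
move=> /subnKC <-; rewrite !stab_addn mulmx_block.
by rewrite !mulmx0 !mul0mx !addr0 !add0r mul1mx.
Qed.

Lemma stab1 n p : (n <= p)%N -> stab p (1%:M : 'M[R]_n) = 1%:M.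
Proof. by move=> /subnKC <-; rewrite stab_addn -scalar_mx_block. Qed.

Lemma stab_entry p n (M : 'M[R]_n) (i j : 'I_p) (i' j' : 'I_n) :
  val i = val i' -> val j = val j' -> stab p M i j = M i' j'.
Proof.
move=> Ei Ej; rewrite mxE insubT ?Ei //= => h1; rewrite insubT ?Ej //= => h2.
by congr (M _ _); apply: val_inj.
Qed.

Lemma stab_entry_out p n (M : 'M[R]_n) (i j : 'I_p) :
  ~~ ((i < n) && (j < n))%N -> stab p M i j = (val i == val j)%:R.
Proof.
rewrite negb_and mxE => /orP[] h; first by rewrite insubF //; apply/negbTE.
by case: (insub (val i) : option 'I_n) => // i'; rewrite insubF //; apply/negbTE.
Qed.

Lemma stab_stab n q p (M : 'M[R]_n) : (n <= q)%N -> (q <= p)%N ->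
  stab p (stab q M) = stab p M.
Proof.
move=> le_nq le_qp; apply/matrixP=> i j.
have [/andP[lt_in lt_jn] | out] := boolP ((i < n) && (j < n))%N.
  have lt_iq := leq_trans lt_in le_nq; have lt_jq := leq_trans lt_jn le_nq.
  rewrite (stab_entry _ (i' := Ordinal lt_iq) (j' := Ordinal lt_jq)) //.
  by rewrite !(stab_entry _ (i' := Ordinal lt_in) (j' := Ordinal lt_jn)).
rewrite [RHS]stab_entry_out //.
have [/andP[lt_iq lt_jq] | out'] := boolP ((i < q) && (j < q))%N; last first.
  by rewrite stab_entry_out.
by rewrite (stab_entry _ (i' := Ordinal lt_iq) (j' := Ordinal lt_jq)) // stab_entry_out.
Qed.

Lemma stab_block_diag n k p (M : 'M[R]_n) (S : 'M[R]_k) : (k <= p)%N ->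
  stab (n + p) (block_mx M 0 0 S) = block_mx M 0 0 (stab p S).
Proof.
move=> le_kp; apply/matrixP=> i j; rewrite -[i]splitK -[j]splitK.
case: (split i) => i'; case: (split j) => j' /=;
  rewrite ?block_mxEul ?block_mxEur ?block_mxEdl ?block_mxEdr.
- by rewrite (stab_entry _ (i' := lshift k i') (j' := lshift k j')) // block_mxEul.
- case: (ltnP j' k) => hj.
    rewrite (stab_entry _ (i' := lshift k i') (j' := rshift n (Ordinal hj))) //.
    by rewrite block_mxEur !mxE.
  rewrite stab_entry_out /=; last by rewrite ltn_add2l [(j' < k)%N]ltnNge hj andbF.
  by rewrite mxE; case: eqP => // E; move: (ltn_ord i'); rewrite E ltnNge leq_addr.
- case: (ltnP i' k) => hi.
    rewrite (stab_entry _ (i' := rshift n (Ordinal hi)) (j' := lshift k j')) //.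
    by rewrite block_mxEdl !mxE.
  rewrite stab_entry_out /=; last by rewrite ltn_add2l [(i' < k)%N]ltnNge hi.
  by rewrite mxE; case: eqP => // E; move: (ltn_ord j'); rewrite -E ltnNge leq_addr.
- case: (ltnP i' k) => hi; case: (ltnP j' k) => hj.
  + rewrite (stab_entry _ (i' := rshift n (Ordinal hi)) (j' := rshift n (Ordinal hj))) //.
    by rewrite block_mxEdr (stab_entry _ (i' := Ordinal hi) (j' := Ordinal hj)).
  all: rewrite !stab_entry_out /= ?eqn_add2l //.
  all: by rewrite ?ltn_add2l ?(ltnNge i' k) ?(ltnNge j' k) ?hi ?hj ?andbF ?andbT.
Qed.

End Stabilisation.

Lemma map_stab (R S : pzRingType) (f : {rmorphism R -> S}) p n (M : 'M[R]_n) :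
  map_mx f (stab p M) = stab p (map_mx f M).
Proof.
apply/matrixP=> i j; rewrite !mxE.
by case: (insub (val i) : option 'I_n) => [i'|]; case: (insub (val j) : option 'I_n) => [j'|];
  rewrite ?mxE ?rmorph_nat.
Qed.

Section CommutatorSubgroup.
Variable R : pzRingType.

Definition mx_inverse n (M N : 'M[R]_n) := M *m N = 1%:M /\ N *m M = 1%:M.

Lemma mx_inverse_sym n (M N : 'M[R]_n) : mx_inverse M N -> mx_inverse N M.
Proof. by case. Qed.

Lemma mx_inverse1 n : mx_inverse (1%:M : 'M[R]_n) 1%:M.
Proof. by split; rewrite mulmx1. Qed.

Lemma mx_inverseM n (M N Mi Ni : 'M[R]_n) :
  mx_inverse M Mi -> mx_inverse N Ni -> mx_inverse (M *m N) (Ni *m Mi).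
Proof.
move=> [MMi MiM] [NNi NiN]; split.
  by rewrite mulmxA -(mulmxA M) NNi mulmx1 MMi.
by rewrite mulmxA -(mulmxA Ni) MiM mulmx1 NiN.
Qed.

Lemma invertible_mx1 n : invertible_mx (1%:M : 'M[R]_n).
Proof. by exists 1%:M; apply: mx_inverse1. Qed.

Lemma mx_inverse_uniq n (M N N' : 'M[R]_n) :
  mx_inverse M N -> mx_inverse M N' -> N = N'.
Proof. by move=> [_ NM] [MN' _]; rewrite -[N]mulmx1 -MN' mulmxA NM mul1mx. Qed.

Lemma mx_inverse_stab n p (M N : 'M[R]_n) : (n <= p)%N ->
  mx_inverse M N -> mx_inverse (stab p M) (stab p N).
Proof. by move=> le_np [MN NM]; split; rewrite -stabM // ?MN ?NM stab1. Qed.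

Lemma mx_inverse_commutator n (g gi h hi : 'M[R]_n) :
  mx_inverse g gi -> mx_inverse h hi ->
  mx_inverse (g *m h *m gi *m hi) (h *m g *m hi *m gi).
Proof.
move=> ig ih; have := mx_inverseM (mx_inverseM (mx_inverseM ig ih)
  (mx_inverse_sym ig)) (mx_inverse_sym ih).
by rewrite !mulmxA.
Qed.

Lemma commprodM p (X Y : 'M[R]_p) : commprod X -> commprod Y -> commprod (X *m Y).
Proof.
move=> cX; elim=> [|Y' g gi h hi gg1 gg2 hh1 hh2 _ IH]; first by rewrite mulmx1.
by rewrite mulmxA; apply: commprodS.
Qed.

Lemma commprod_commutator p (g gi h hi : 'M[R]_p) :
  mx_inverse g gi -> mx_inverse h hi -> commprod (g *m h *m gi *m hi).
Proof.
by move=> [gg1 gg2] [hh1 hh2]; rewrite -[_ *m hi]mul1mx; apply: commprodS => //;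
  apply: commprod1.
Qed.

Lemma commprod_inverse p (X : 'M[R]_p) :
  commprod X -> exists2 Xi, commprod Xi & mx_inverse X Xi.
Proof.
elim=> [|X' g gi h hi gg1 gg2 hh1 hh2 _ [Xi' cXi' iX']].
  by exists 1%:M; [apply: commprod1 | apply: mx_inverse1].
have ic := mx_inverse_commutator (conj gg1 gg2) (conj hh1 hh2).
exists (h *m g *m hi *m gi *m Xi'); last exact: mx_inverseM.
by apply: commprodM => //; apply: commprod_commutator.
Qed.

Lemma commprod_conj p (X P Pi : 'M[R]_p) :
  mx_inverse P Pi -> commprod X -> commprod (P *m X *m Pi).
Proof.
move=> [PPi PiP]; elim=> [|X' g gi h hi gg1 gg2 hh1 hh2 _ IH].
  by rewrite mulmx1 PPi; apply: commprod1.
have conjM (Y Z : 'M[R]_p) : P *m (Y *m Z) *m Pi = P *m Y *m Pi *m (P *m Z *m Pi).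
  by rewrite !mulmxA -(mulmxA _ Pi P) PiP mulmx1.
have conj_inv (Y Yi : 'M[R]_p) :
    mx_inverse Y Yi -> mx_inverse (P *m Y *m Pi) (P *m Yi *m Pi).
  by move=> [YYi YiY]; split; rewrite -conjM ?YYi ?YiY mulmx1 PPi.
rewrite conjM; apply: commprodM => //; rewrite !conjM.
by apply: commprod_commutator; apply: conj_inv.
Qed.

Lemma commprod_stab n p (X : 'M[R]_n) : (n <= p)%N -> commprod X -> commprod (stab p X).
Proof.
move=> le_np; elim=> [|X' g gi h hi gg1 gg2 hh1 hh2 _ IH].
  by rewrite stab1 //; apply: commprod1.
rewrite !stabM //; apply: commprodM => //.
by apply: commprod_commutator; apply: mx_inverse_stab.
Qed.

Lemma commprod_block1 n p (X : 'M[R]_p) :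
  commprod X -> commprod (block_mx (1%:M : 'M[R]_n) 0 0 X).
Proof.
have diagM (Y Z : 'M[R]_p) : block_mx (1%:M : 'M[R]_n) 0 0 (Y *m Z) =
    block_mx 1%:M 0 0 Y *m block_mx 1%:M 0 0 Z.
  by rewrite mulmx_block !mulmx0 !mul0mx !addr0 !add0r mulmx1.
elim=> [|X' g gi h hi gg1 gg2 hh1 hh2 _ IH].
  by rewrite -scalar_mx_block; apply: commprod1.
rewrite !diagM; apply: commprodM => //; apply: commprod_commutator; split;
  by rewrite -diagM ?gg1 ?gg2 ?hh1 ?hh2 -scalar_mx_block.
Qed.

End CommutatorSubgroup.

Lemma mx_inverse_map (R S : pzRingType) (f : {rmorphism R -> S}) n (M N : 'M[R]_n) :
  mx_inverse M N -> mx_inverse (map_mx f M) (map_mx f N).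
Proof. by move=> [MN NM]; split; rewrite -map_mxM ?MN ?NM map_mx1. Qed.

Lemma commprod_map (R S : pzRingType) (f : {rmorphism R -> S}) p (X : 'M[R]_p) :
  commprod X -> commprod (map_mx f X).
Proof.
elim=> [|X' g gi h hi gg1 gg2 hh1 hh2 _ IH]; first by rewrite map_mx1; apply: commprod1.
rewrite !map_mxM; apply: commprodM => //.
by apply: commprod_commutator; apply: mx_inverse_map.
Qed.

Section K1Classes.
Variable R : pzRingType.

Definition eq_mod_comm p (M N : 'M[R]_p) := exists X, commprod X /\ M = X *m N.

Lemma eq_mod_comm_refl p (M : 'M[R]_p) : eq_mod_comm M M.
Proof. by exists 1%:M; split; [apply: commprod1 | rewrite mul1mx]. Qed.

Lemma eq_mod_comm_sym p (M N : 'M[R]_p) : eq_mod_comm M N -> eq_mod_comm N M.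
Proof.
move=> [X [cX ->]]; have [Xi cXi [_ XiX]] := commprod_inverse cX.
by exists Xi; split; rewrite // mulmxA XiX mul1mx.
Qed.

Lemma eq_mod_comm_trans p (M N P : 'M[R]_p) :
  eq_mod_comm M N -> eq_mod_comm N P -> eq_mod_comm M P.
Proof.
move=> [X [cX ->]] [Y [cY ->]]; exists (X *m Y).
by split; [apply: commprodM | rewrite mulmxA].
Qed.

Lemma eq_mod_commMr p (M N P : 'M[R]_p) :
  eq_mod_comm M N -> eq_mod_comm (M *m P) (N *m P).
Proof. by move=> [X [cX ->]]; exists X; rewrite mulmxA. Qed.

Lemma eq_mod_commMl p (M N P Pi : 'M[R]_p) :
  mx_inverse P Pi -> eq_mod_comm M N -> eq_mod_comm (P *m M) (P *m N).
Proof.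
move=> iP [X [cX ->]]; exists (P *m X *m Pi); split; first exact: commprod_conj.
by case: iP => _ PiP; rewrite -!mulmxA (mulmxA Pi) PiP mul1mx.
Qed.

Lemma eq_mod_comm_commute p (g gi h hi : 'M[R]_p) :
  mx_inverse g gi -> mx_inverse h hi -> eq_mod_comm (g *m h) (h *m g).
Proof.
move=> ig ih; exists (g *m h *m gi *m hi); split; first exact: commprod_commutator.
case: ig ih => _ gig [_ hih].
by rewrite !mulmxA -(mulmxA _ hi h) hih mulmx1 -(mulmxA _ gi g) gig mulmx1.
Qed.

Lemma eq_mod_comm_stab n p (M N : 'M[R]_n) : (n <= p)%N ->
  eq_mod_comm M N -> eq_mod_comm (stab p M) (stab p N).
Proof.
move=> le_np [X [cX ->]]; exists (stab p X).
by split; [apply: commprod_stab | apply: stabM].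
Qed.

Lemma K1eq_ge q n m (M : 'M[R]_n) (N : 'M[R]_m) : K1eq M N ->
  exists p, [/\ (q <= p)%N, (n <= p)%N, (m <= p)%N & eq_mod_comm (stab p M) (stab p N)].
Proof.
move=> [p [le_np le_mp MN]]; exists (maxn p q); rewrite leq_maxr.
have le_p := leq_maxl p q.
split=> //; [exact: leq_trans le_p | exact: leq_trans le_p |].
rewrite -(stab_stab _ le_np le_p) -(stab_stab _ le_mp le_p).
exact: eq_mod_comm_stab.
Qed.

Lemma K1eq_of_eq_mod_comm p (M N : 'M[R]_p) : eq_mod_comm M N -> K1eq M N.
Proof. by move=> MN; exists p; rewrite !stab_id. Qed.

Lemma K1eq_refl n (M : 'M[R]_n) : K1eq M M.
Proof. exact/K1eq_of_eq_mod_comm/eq_mod_comm_refl. Qed.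

Lemma K1eq_sym n m (M : 'M[R]_n) (N : 'M[R]_m) : K1eq M N -> K1eq N M.
Proof. by move=> [p [le_np le_mp MN]]; exists p; split=> //; apply: eq_mod_comm_sym. Qed.

Lemma K1eq_trans n m k (M : 'M[R]_n) (N : 'M[R]_m) (P : 'M[R]_k) :
  K1eq M N -> K1eq N P -> K1eq M P.
Proof.
move=> MN NP; have [p [_ le_np le_mp eMN]] := K1eq_ge 0 MN.
have [q [le_pq le_mq le_kq eNP]] := K1eq_ge p NP.
exists q; split=> //; first exact: leq_trans le_pq.
apply: eq_mod_comm_trans eNP; rewrite -(stab_stab _ le_np le_pq) -(stab_stab _ le_mp le_pq).
exact: eq_mod_comm_stab.
Qed.

Lemma K1eq_stab n p (M : 'M[R]_n) : (n <= p)%N -> K1eq (stab p M) M.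
Proof. by move=> le_np; exists p; rewrite stab_stab //; split=> //; apply: eq_mod_comm_refl. Qed.

Lemma K1eqM n m (M N : 'M[R]_n) (M' N' : 'M[R]_m) : invertible_mx M' ->
  K1eq M M' -> K1eq N N' -> K1eq (M *m N) (M' *m N').
Proof.
move=> [Mi' iM'] MM' NN'; have [p [_ le_np le_mp eMM']] := K1eq_ge 0 MM'.
have [q [le_pq le_nq le_mq eNN']] := K1eq_ge p NN'.
have eMM'q : eq_mod_comm (stab q M) (stab q M').
  by rewrite -(stab_stab _ le_np le_pq) -(stab_stab _ le_mp le_pq); apply: eq_mod_comm_stab.
exists q; split=> //; rewrite !stabM //.
apply: (@eq_mod_comm_trans _ _ (stab q M' *m stab q N)); first exact: eq_mod_commMr.
exact: eq_mod_commMl (mx_inverse_stab le_mq iM') eNN'.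
Qed.

Lemma K1eq_scalar1 n m : K1eq (1%:M : 'M[R]_n) (1%:M : 'M[R]_m).
Proof.
exists (n + m)%N; rewrite leq_addr leq_addl !stab1 ?leq_addr ?leq_addl //.
by split=> //; apply: eq_mod_comm_refl.
Qed.

Lemma K1eq_block_scalar p (a : R) :
  K1eq (block_mx a%:M 0 0 1%:M : 'M_(1 + p)) (a%:M : 'M[R]_1).
Proof. by rewrite -stab_addn; apply: K1eq_stab; rewrite leq_addr. Qed.

Lemma K1eq_mul1l n (L N : 'M[R]_n) : K1eq L (1%:M : 'M_n) -> K1eq (L *m N) N.
Proof.
move=> L1; have := K1eqM (invertible_mx1 R n) L1 (K1eq_refl N).
by rewrite mul1mx.
Qed.

Lemma K1eq_mul1r n (N U : 'M[R]_n) : invertible_mx N -> K1eq U (1%:M : 'M_n) -> K1eq (N *m U) N.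
Proof. by move=> iN U1; have := K1eqM iN (K1eq_refl N) U1; rewrite mulmx1. Qed.

End K1Classes.

Lemma K1eq_map (R S : pzRingType) (f : {rmorphism R -> S}) n m
  (M : 'M[R]_n) (N : 'M[R]_m) : K1eq M N -> K1eq (map_mx f M) (map_mx f N).
Proof.
move=> [p [le_np le_mp [X [cX MN]]]]; exists p; split=> //; exists (map_mx f X).
by split; [apply: commprod_map | rewrite -!map_stab MN map_mxM].
Qed.

(** * Elementary matrices and the Whitehead lemma *)

Section ElementaryMatrices.
Variable R : pzRingType.

Section Block3.
Variables n1 n2 n3 : nat.

Definition block3_mx (a11 : 'M[R]_(n1, n1)) (a12 : 'M[R]_(n1, n2)) (a13 : 'M[R]_(n1, n3))
  (a21 : 'M[R]_(n2, n1)) (a22 : 'M[R]_(n2, n2)) (a23 : 'M[R]_(n2, n3))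
  (a31 : 'M[R]_(n3, n1)) (a32 : 'M[R]_(n3, n2)) (a33 : 'M[R]_(n3, n3))
  : 'M[R]_(n1 + n2 + n3) :=
  block_mx (block_mx a11 a12 a21 a22) (col_mx a13 a23) (row_mx a31 a32) a33.

Lemma mul_block3_mx a11 a12 a13 a21 a22 a23 a31 a32 a33
    b11 b12 b13 b21 b22 b23 b31 b32 b33 :
  block3_mx a11 a12 a13 a21 a22 a23 a31 a32 a33 *m
  block3_mx b11 b12 b13 b21 b22 b23 b31 b32 b33 =
  block3_mx (a11 *m b11 + a12 *m b21 + a13 *m b31) (a11 *m b12 + a12 *m b22 + a13 *m b32)
      (a11 *m b13 + a12 *m b23 + a13 *m b33)
      (a21 *m b11 + a22 *m b21 + a23 *m b31) (a21 *m b12 + a22 *m b22 + a23 *m b32)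
      (a21 *m b13 + a22 *m b23 + a23 *m b33)
      (a31 *m b11 + a32 *m b21 + a33 *m b31) (a31 *m b12 + a32 *m b22 + a33 *m b32)
      (a31 *m b13 + a32 *m b23 + a33 *m b33).
Proof.
rewrite /block3_mx !mulmx_block mul_col_row mul_block_col mul_row_block mul_row_col.
by rewrite mul_mx_row mul_col_mx !add_block_mx add_col_mx add_row_mx.
Qed.

Lemma block3_mx1 : block3_mx 1%:M 0 0 0 1%:M 0 0 0 1%:M = 1%:M.
Proof. by rewrite /block3_mx -!scalar_mx_block col_mx0 row_mx0 -scalar_mx_block. Qed.

End Block3.

Local Ltac simp_block3 := rewrite ?mul_block3_mx;
  rewrite ?(mul1mx, mulmx1, mul0mx, mulmx0, mulNmx, mulmxN, oppr0, opprK,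
            addr0, add0r, subr0, subrr, addNr, addrN).

(* e_21(z) = [e_23(z), e_31(1)] and e_12(y) = [e_13(1), e_32(y)] in block form. *)
Lemma commprod_elem_lower n k (z : 'M[R]_(k, n)) :
  commprod (block3_mx 1%:M 0 0 z 1%:M 0 0 0 (1%:M : 'M_n)).
Proof.
have -> : block3_mx 1%:M 0 0 z 1%:M 0 0 0 (1%:M : 'M_n) =
  block3_mx 1%:M 0 0 0 1%:M z 0 0 1%:M *m block3_mx 1%:M 0 0 0 1%:M 0 1%:M 0 1%:M *m
  block3_mx 1%:M 0 0 0 1%:M (- z) 0 0 1%:M *m block3_mx 1%:M 0 0 0 1%:M 0 (- 1%:M) 0 1%:M.
  by simp_block3; simp_block3; simp_block3.
by apply: commprod_commutator; split; simp_block3; rewrite block3_mx1.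
Qed.

Lemma commprod_elem_upper n k (y : 'M[R]_(n, k)) :
  commprod (block3_mx 1%:M y 0 0 1%:M 0 0 0 (1%:M : 'M_n)).
Proof.
have -> : block3_mx 1%:M y 0 0 1%:M 0 0 0 (1%:M : 'M_n) =
  block3_mx 1%:M 0 1%:M 0 1%:M 0 0 0 1%:M *m block3_mx 1%:M 0 0 0 1%:M 0 0 y 1%:M *m
  block3_mx 1%:M 0 (- 1%:M) 0 1%:M 0 0 0 1%:M *m block3_mx 1%:M 0 0 0 1%:M 0 0 (- y) 1%:M.
  by simp_block3; simp_block3; simp_block3.
by apply: commprod_commutator; split; simp_block3; rewrite block3_mx1.
Qed.

Lemma K1eq_elem_lower n k (z : 'M[R]_(k, n)) :
  K1eq (block_mx 1%:M 0 z 1%:M : 'M_(n + k)) (1%:M : 'M_(n + k)).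
Proof.
exists (n + k + n)%N; rewrite leq_addr stab1 ?leq_addr // stab_addn; split=> //.
exists (block3_mx 1%:M 0 0 z 1%:M 0 0 0 1%:M); split; first exact: commprod_elem_lower.
by rewrite mulmx1 /block3_mx col_mx0 row_mx0.
Qed.

Lemma K1eq_elem_upper n k (y : 'M[R]_(n, k)) :
  K1eq (block_mx 1%:M y 0 1%:M : 'M_(n + k)) (1%:M : 'M_(n + k)).
Proof.
exists (n + k + n)%N; rewrite leq_addr stab1 ?leq_addr // stab_addn; split=> //.
exists (block3_mx 1%:M y 0 0 1%:M 0 0 0 1%:M); split; first exact: commprod_elem_upper.
by rewrite mulmx1 /block3_mx col_mx0 row_mx0.
Qed.

Lemma K1eq_block1 k k' (S : 'M[R]_k) (S' : 'M[R]_k') : K1eq S S' ->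
  K1eq (block_mx (1%:M : 'M_1) 0 0 S : 'M_(1 + k))
       (block_mx (1%:M : 'M_1) 0 0 S' : 'M_(1 + k')).
Proof.
move=> SS'; have [p [_ le_kp le_k'p [X [cX eS]]]] := K1eq_ge 0 SS'.
exists (1 + p)%N; rewrite !leq_add2l; split=> //.
rewrite !stab_block_diag // eS; exists (block_mx 1%:M 0 0 X).
split; first exact: commprod_block1.
by rewrite mulmx_block !mulmx0 !mul0mx !addr0 !add0r mulmx1.
Qed.

End ElementaryMatrices.

Section RingInverses.
Variable R : pzRingType.

Lemma inv_uniq (u v w : R) : u * v = 1 -> w * u = 1 -> v = w.
Proof. by move=> uv wu; rewrite -[v]mul1r -wu -mulrA uv mulr1. Qed.

Lemma jacobson_inverse (a b w : R) : (1 + b * a) * w = 1 -> w * (1 + b * a) = 1 ->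
  (1 + a * b) * (1 - a * w * b) = 1 /\ (1 - a * w * b) * (1 + a * b) = 1.
Proof.
move=> baw wba; split.
  have awb : a * w * b + a * b * (a * w * b) = a * b.
    transitivity (a * ((1 + b * a) * w) * b); last by rewrite baw mulr1.
    by rewrite mulrDl mul1r mulrDr mulrDl !mulrA.
  rewrite mulrDl mul1r mulrBr mulr1.
  suff -> : a * b - a * b * (a * w * b) = a * w * b by rewrite subrK.
  by apply/eqP; rewrite subr_eq awb.
have awb : a * w * b + a * w * b * (a * b) = a * b.
  transitivity (a * (w * (1 + b * a)) * b); last by rewrite wba mulr1.
  by rewrite mulrDr mulr1 mulrDr mulrDl !mulrA.
rewrite mulrDr mulr1 mulrBl mul1r.
suff -> : a * b - a * w * b * (a * b) = a * w * b by rewrite subrK.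
by apply/eqP; rewrite subr_eq awb.
Qed.

End RingInverses.

Section TwoByTwo.
Variable R : pzRingType.

Definition mx22 (a b c d : R) : 'M[R]_(1 + 1) := block_mx a%:M b%:M c%:M d%:M.

Lemma mul_mx22 a b c d a' b' c' d' : mx22 a b c d *m mx22 a' b' c' d' =
  mx22 (a * a' + b * c') (a * b' + b * d') (c * a' + d * c') (c * b' + d * d').
Proof. by rewrite /mx22 mulmx_block -!scalar_mxM -!(raddfD scalar_mx). Qed.

Lemma scalar_mx11E (a : R) : (a%:M : 'M_1) 0 0 = a.
Proof. by rewrite mxE eqxx. Qed.

Lemma mx22_1 : mx22 1 0 0 1 = 1%:M.
Proof. by rewrite /mx22 raddf0 -scalar_mx_block. Qed.

Lemma mx_inverse_mx22_diag (a ai d di : R) :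
  a * ai = 1 -> ai * a = 1 -> d * di = 1 -> di * d = 1 ->
  mx_inverse (mx22 a 0 0 d) (mx22 ai 0 0 di).
Proof.
by move=> aai aia ddi did; split; rewrite mul_mx22 !(mulr0, mul0r, addr0, add0r)
  ?aai ?aia ?ddi ?did mx22_1.
Qed.

Lemma K1eq_scalar_mx22 (u : R) : K1eq (u%:M : 'M[R]_1) (mx22 u 0 0 1).
Proof.
apply: K1eq_sym; rewrite (_ : mx22 u 0 0 1 = stab (1 + 1) (u%:M : 'M_1)).
  exact: K1eq_stab.
by rewrite stab_addn /mx22 raddf0.
Qed.

(* With v = (1 + ab)^-1 (Jacobson), diag(1 + ab, (1 + ba)^-1) is the product
   of elementary matrices e21(-bv) e12(a) e21(b) e12(-va). *)
Lemma K1eq_mx22_diag_1ab (a b w : R) : (1 + b * a) * w = 1 -> w * (1 + b * a) = 1 ->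
  K1eq (mx22 (1 + a * b) 0 0 w) (1%:M : 'M_(1 + 1)).
Proof.
move=> baw wba; have [abv vab] := jacobson_inverse baw wba.
set v := 1 - a * w * b in abv vab; clearbody v.
have [bva vba] := jacobson_inverse abv vab.
have wE : 1 - b * v * a = w by apply: inv_uniq bva wba.
have -> : mx22 (1 + a * b) 0 0 w =
    mx22 1 0 (- (b * v)) 1 *m (mx22 1 a 0 1 *m (mx22 1 0 b 1 *m mx22 1 (- (v * a)) 0 1)).
  have entry12 : - (v * a) + a * (b * - (v * a) + 1) = 0.
    rewrite mulrDr mulr1 !mulrN !mulrA addrA -opprD.
    by rewrite -[_ + _ * v * a]mulrDl -{1}[v]mul1r -mulrDl abv mul1r addNr.
  rewrite !mul_mx22 !(mul1r, mulr1, mul0r, mulr0, addr0, add0r) entry12 mulr0 add0r.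
  by rewrite mulNr -mulrA vab mulr1 addNr mulrN mulrA [_ + 1]addrC wE.
have elem_lower z : K1eq (mx22 1 0 z 1) (1%:M : 'M_(1 + 1)).
  by rewrite /mx22 raddf0; apply: K1eq_elem_lower.
have elem_upper y : K1eq (mx22 1 y 0 1) (1%:M : 'M_(1 + 1)).
  by rewrite /mx22 raddf0; apply: K1eq_elem_upper.
apply: K1eq_trans (K1eq_mul1l _ (elem_lower _)) _.
apply: K1eq_trans (K1eq_mul1l _ (elem_upper _)) _.
exact: K1eq_trans (K1eq_mul1l _ (elem_lower _)) (elem_upper _).
Qed.

Lemma K1eq_mx22_diag_inv (v vi : R) : v * vi = 1 -> vi * v = 1 ->
  K1eq (mx22 vi 0 0 v) (1%:M : 'M_(1 + 1)).
Proof.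
move=> vvi viv; have := @K1eq_mx22_diag_1ab (vi - 1) 1 v.
by rewrite mulr1 mul1r addrC subrK; apply.
Qed.

Lemma K1eq_jacobson_unit (a b w : R) : (1 + b * a) * w = 1 -> w * (1 + b * a) = 1 ->
  K1eq (((1 + a * b) * w)%:M : 'M_1) (1%:M : 'M_1).
Proof.
move=> baw wba; apply: K1eq_trans (K1eq_scalar_mx22 _) _.
have -> : mx22 ((1 + a * b) * w) 0 0 1 =
    mx22 (1 + a * b) 0 0 w *m mx22 w 0 0 (1 + b * a).
  by rewrite mul_mx22 !(mulr0, mul0r, addr0, add0r) wba.
have := K1eqM (invertible_mx1 R _) (K1eq_mx22_diag_1ab baw wba)
  (K1eq_mx22_diag_inv baw wba).
rewrite mulmx1 => /K1eq_trans; apply.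
by rewrite -mx22_1; apply/K1eq_sym/K1eq_scalar_mx22.
Qed.

End TwoByTwo.

(** * Elimination along the diagonal *)

(* Junk value when u is not a unit. *)
Definition unit_inv (R : pzRingType) (u : R) : R :=
  epsilon (inhabits 0) (fun v => u * v = 1 /\ v * u = 1).

Lemma unit_invP (R : pzRingType) (u : R) : (exists v, u * v = 1 /\ v * u = 1) ->
  u * unit_inv u = 1 /\ unit_inv u * u = 1.
Proof. exact: epsilon_spec. Qed.

Definition mx_inv (R : pzRingType) p (M : 'M[R]_p) : 'M[R]_p :=
  epsilon (inhabits 0) (mx_inverse M).

Lemma mx_invE (R : pzRingType) p (M N : 'M[R]_p) : mx_inverse M N -> mx_inv M = N.
Proof. by move=> iM; apply: (mx_inverse_uniq _ iM); apply: epsilon_spec; exists N. Qed.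

Section SchurDeterminant.
Variable R : pzRingType.

(* The product of the pivots of Gaussian elimination without row exchanges. *)
Fixpoint schur_det p : 'M[R]_p -> R :=
  if p is p'.+1 then fun M : 'M_(1 + p') =>
    ulsubmx M 0 0 *
    schur_det (drsubmx M - dlsubmx M *m (unit_inv (ulsubmx M 0 0))%:M *m ursubmx M)
  else fun _ => 1.

Lemma schur_det_block p (a : R) (r : 'rV[R]_p) (c : 'cV[R]_p) (D : 'M[R]_p) :
  schur_det (block_mx a%:M r c D : 'M_(1 + p)) =
  a * schur_det (D - c *m (unit_inv a)%:M *m r).
Proof. by rewrite /= block_mxKul block_mxKur block_mxKdl block_mxKdr mxE eqxx. Qed.

Lemma block_mx_split1 p (M : 'M[R]_(1 + p)) :
  M = block_mx (M 0 0)%:M (ursubmx M) (dlsubmx M) (drsubmx M).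
Proof.
rewrite -{1}[M]submxK [ulsubmx M]mx11_scalar; congr (block_mx _%:M _ _ _).
by rewrite !mxE; congr (M _ _); apply: val_inj.
Qed.

Lemma schur_det1 p : schur_det (1%:M : 'M[R]_p) = 1.
Proof.
elim: p => // p IH; change (schur_det (1%:M : 'M[R]_(1 + p)) = 1).
by rewrite (scalar_mx_block 1 p) schur_det_block !mul0mx subr0 IH mulr1.
Qed.

Lemma block_mx_LDU p (a ai : R) (r : 'rV[R]_p) (c : 'cV[R]_p) (D : 'M[R]_p) :
  a * ai = 1 -> ai * a = 1 ->
  block_mx a%:M r c D = block_mx 1%:M 0 (c *m ai%:M) 1%:M *m
    block_mx a%:M 0 0 (D - c *m ai%:M *m r) *m block_mx 1%:M (ai%:M *m r) 0 1%:M
  :> 'M_(1 + p).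
Proof.
move=> aai aia; rewrite !mulmx_block !mul1mx !mul0mx !mulmx0 !mulmx1 ?addr0 ?add0r.
rewrite mulmxA -scalar_mxM aai mul1mx -(mulmxA c) -scalar_mxM aia mulmx1.
by rewrite mulmxA addrC subrK.
Qed.

Lemma schur_complement_upper p (a ai a' ai' : R) (r y : 'rV[R]_p) (c : 'cV[R]_p)
    (D : 'M[R]_p) :
  a' = a + (y *m c) 0 0 -> a * ai = 1 -> ai' * a' = 1 ->
  D - c *m ai'%:M *m (r + y *m D) =
  (1%:M - c *m ai'%:M *m y) *m (D - c *m ai%:M *m r).
Proof.
move=> a'E aai ai'a'.
have ycE : y *m c = ((y *m c) 0 0)%:M by rewrite -mx11_scalar.
have aiE : ai - ai' * (y *m c) 0 0 * ai = ai'.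
  by rewrite -{1}[ai]mul1r -ai'a' a'E mulrDr mulrDl -(mulrA ai' a) aai mulr1 addrK.
rewrite mulmxBl mul1mx mulmxBr !mulmxA -(mulmxA _ y c) ycE -!(mulmxA c) -!scalar_mxM.
have ai'E : c *m (ai'%:M *m r) =
    c *m (ai%:M *m r) - c *m ((ai' * (y *m c) 0 0 * ai)%:M *m r).
  by rewrite -mulmxBr -mulmxBl -(raddfB scalar_mx) aiE.
rewrite !mulmxDr ai'E !mulmxA.
set X := c *m ai%:M *m r; set Z := c *m _ *m r; set Y := c *m ai'%:M *m y *m D.
by rewrite opprD !opprB !addrA (addrAC D Z).
Qed.

Lemma lower_elem_rank1 p (z : 'cV[R]_p) :
  block_mx 1%:M 0 z 1%:M = 1%:M + col_mx 0 z *m row_mx (1%:M : 'M_1) 0 :> 'M_(1 + p).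
Proof.
rewrite mul_col_row !mulmx1 !mul0mx !mulmx0 (scalar_mx_block 1 p) add_block_mx.
by rewrite !addr0 add0r.
Qed.

Lemma upper_elem_rank1 p (y : 'rV[R]_p) :
  block_mx 1%:M y 0 1%:M = 1%:M + col_mx (1%:M : 'M_1) 0 *m row_mx 0 y :> 'M_(1 + p).
Proof.
rewrite mul_col_row !mul1mx !mul0mx (scalar_mx_block 1 p) add_block_mx.
by rewrite !addr0 !add0r.
Qed.

Lemma diag_elem_rank1 p (a : R) :
  block_mx a%:M 0 0 1%:M = 1%:M + col_mx (a - 1)%:M 0 *m row_mx (1%:M : 'M_1) 0
  :> 'M_(1 + p).
Proof.
rewrite mul_col_row !mulmx1 !mul0mx !mulmx0 (scalar_mx_block 1 p) add_block_mx.
by rewrite !addr0 -(raddfD scalar_mx) addrC subrK.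
Qed.

End SchurDeterminant.

(** * The subgroup C *)

Section LocalAugmentation.
Variables (A B : pzRingType) (eps : {rmorphism B -> A}).
Hypothesis eps_local : local_hom eps.

Lemma eps1_unit (u : B) : eps u = 1 -> u * unit_inv u = 1 /\ unit_inv u * u = 1.
Proof.
move=> eu; apply: unit_invP.
have [N [uN Nu]] : invertible_mx (u%:M : 'M[B]_1).
  by apply: eps_local; rewrite map_scalar_mx eu; exists 1%:M; rewrite mulmx1.
exists (N 0 0); split.
  by move/matrixP/(_ 0 0): uN; rewrite mul_scalar_mx !mxE eqxx.
by move/matrixP/(_ 0 0): Nu; rewrite !mxE big_ord1 !mxE eqxx mulr1n.
Qed.

Lemma eps1_inv (u v : B) : eps u = 1 -> u * v = 1 -> eps v = 1.
Proof. by move=> eu /(congr1 eps); rewrite rmorphM eu mul1r rmorph1. Qed.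

Lemma eps_unit_inv (u : B) : eps u = 1 -> eps (unit_inv u) = 1.
Proof. by move=> eu; apply: eps1_inv eu (proj1 (eps1_unit eu)). Qed.

Lemma inCM (x y : B) : inC eps x -> inC eps y -> inC eps (x * y).
Proof.
move=> Cx; elim=> [|y' a b w ab0 ba0 baw wba _ IH|y' a b w z ab0 ba0 baw wba gz zg _ IH].
- by rewrite mulr1.
- by rewrite mulrA; apply: inCgen.
- by rewrite mulrA; apply: (inCinv (a := a) (b := b) (w := w)).
Qed.

Lemma inC_gen (a b w : B) : eps (a * b) = 0 -> eps (b * a) = 0 ->
  (1 + b * a) * w = 1 -> w * (1 + b * a) = 1 -> inC eps ((1 + a * b) * w).
Proof. by move=> *; rewrite -[X in inC _ X]mul1r; apply: inCgen => //; apply: inC1. Qed.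

Lemma inC_inverse (x : B) : inC eps x ->
  exists2 xi, inC eps xi & x * xi = 1 /\ xi * x = 1.
Proof.
elim=> [|x0 a b w ab0 ba0 baw wba _ [xi Cxi [x0xi xix0]]
        |x0 a b w y ab0 ba0 baw wba gy yg _ [xi Cxi [x0xi xix0]]].
- by exists 1; [apply: inC1 | rewrite mulr1].
- have [abv vab] := jacobson_inverse baw wba.
  set g := (1 + a * b) * w; set gi := (1 + b * a) * (1 - a * w * b).
  have ggi : g * gi = 1 by rewrite /g /gi mulrA -(mulrA _ w) wba mulr1 abv.
  have gig : gi * g = 1 by rewrite /g /gi mulrA -(mulrA _ _ (1 + a * b)) vab mulr1 baw.
  exists (gi * xi); last by rewrite -mulrA (mulrA g) ggi mul1r x0xi
    mulrA -(mulrA gi) xix0 mulr1 gig.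
  apply: inCM Cxi; rewrite -[gi]mul1r.
  by apply: (inCinv (a := a) (b := b) (w := w)) => //; apply: inC1.
- exists ((1 + a * b) * w * xi); first by apply: inCM Cxi; apply: inC_gen.
  by rewrite -mulrA (mulrA y) yg mul1r x0xi mulrA -(mulrA _ xi) xix0 mulr1 gy.
Qed.

Lemma inC_eps1 (x : B) : inC eps x -> eps x = 1.
Proof.
have eps_w a b w : eps (b * a) = 0 -> (1 + b * a) * w = 1 -> eps w = 1.
  by move=> ba0 /(congr1 eps); rewrite rmorphM rmorphD ba0 rmorph1 addr0 mul1r.
elim=> [|x0 a b w ab0 ba0 baw _ _ IH|x0 a b w y ab0 ba0 baw _ gy _ _ IH].
- exact: rmorph1.
- by rewrite !rmorphM rmorphD ab0 rmorph1 addr0 IH (eps_w _ _ _ ba0 baw) !mul1r.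
- have ey : eps y = 1.
    apply: eps1_inv gy; rewrite rmorphM rmorphD ab0 rmorph1 addr0 mul1r.
    exact: eps_w ba0 baw.
  by rewrite rmorphM IH ey mulr1.
Qed.

(* With a = u and b = ui (v - 1) we get 1 + ab = v and 1 + ba = ui v u, so
   the commutator is (1 + ab)(1 + ba)^-1. *)
Lemma inC_commutator (u ui v vi : B) : eps u = 1 -> eps v = 1 ->
  u * ui = 1 -> ui * u = 1 -> v * vi = 1 -> vi * v = 1 ->
  inC eps (v * ui * vi * u).
Proof.
move=> eu ev uui uiu vvi viv.
have eui : eps ui = 1 by apply: eps1_inv eu uui.
have -> : v * ui * vi * u = (1 + u * (ui * (v - 1))) * (ui * vi * u).
  by rewrite (mulrA u ui) uui mul1r addrC subrK !mulrA.
have baE : 1 + ui * (v - 1) * u = ui * v * u.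
  by rewrite mulrBr mulr1 mulrBl uiu addrC subrK.
apply: inC_gen; rewrite ?baE.
- by rewrite mulrA uui mul1r rmorphB ev rmorph1 subrr.
- by rewrite !rmorphM rmorphB ev rmorph1 subrr mulr0 mul0r.
- by rewrite !mulrA -(mulrA _ u ui) uui mulr1 -(mulrA _ v vi) vvi mulr1 uiu.
- by rewrite !mulrA -(mulrA _ u ui) uui mulr1 -(mulrA _ vi v) viv mulr1 uiu.
Qed.

Lemma inC_conj (u ui c : B) : eps u = 1 -> u * ui = 1 -> ui * u = 1 ->
  inC eps c -> inC eps (u * c * ui).
Proof.
move=> eu uui uiu Cc; have [ci Cci [cci cic]] := inC_inverse Cc.
have eci : eps ci = 1 := eps1_inv (inC_eps1 Cc) cci.
have -> : u * c * ui = u * c * ui * ci * c by rewrite -(mulrA _ ci c) cic mulr1.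
by apply: inCM Cc; apply: inC_commutator.
Qed.

Definition congC (u v : B) := exists c, inC eps c /\ v = u * c.

Lemma congC_refl (u : B) : congC u u.
Proof. by exists 1; split; [apply: inC1 | rewrite mulr1]. Qed.

Lemma congC_sym (u v : B) : congC u v -> congC v u.
Proof.
move=> [c [Cc ->]]; have [ci Cci [cci _]] := inC_inverse Cc.
by exists ci; rewrite -mulrA cci mulr1.
Qed.

Lemma congC_trans (u v w : B) : congC u v -> congC v w -> congC u w.
Proof.
move=> [c [Cc ->]] [d [Cd ->]]; exists (c * d).
by split; [apply: inCM | rewrite mulrA].
Qed.

Lemma congCMl (w u v : B) : congC u v -> congC (w * u) (w * v).
Proof. by move=> [c [Cc ->]]; exists c; rewrite mulrA. Qed.

Lemma congCMr (w u v : B) : eps w = 1 -> congC u v -> congC (u * w) (v * w).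
Proof.
move=> ew [c [Cc ->]]; have [wwi wiw] := eps1_unit ew.
exists (unit_inv w * c * w); split; first by apply: inC_conj; rewrite ?eps_unit_inv.
by rewrite !mulrA -(mulrA u w) wwi mulr1.
Qed.

Lemma congC_comm (u v : B) : eps u = 1 -> eps v = 1 -> congC (u * v) (v * u).
Proof.
move=> eu ev; have [uui uiu] := eps1_unit eu; have [vvi viv] := eps1_unit ev.
exists (unit_inv v * unit_inv u * v * u); split.
  by apply: inC_commutator; rewrite ?eps_unit_inv.
by rewrite !mulrA -(mulrA u v) vvi mulr1 uui mul1r.
Qed.

Lemma congC_swap (a b w : B) : eps (a * b) = 0 -> eps (b * a) = 0 ->
  (1 + b * a) * w = 1 -> w * (1 + b * a) = 1 -> congC (1 + b * a) (1 + a * b).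
Proof.
move=> ab0 ba0 baw wba; exists (w * ((1 + a * b) * w) * (1 + b * a)); split.
  apply: inC_conj => //; last exact: inC_gen.
  by apply: eps1_inv baw; rewrite rmorphD ba0 rmorph1 addr0.
by rewrite !mulrA baw mul1r -mulrA wba mulr1.
Qed.

Lemma K1eq_inC (c : B) :
  inC eps c -> K1eq (c%:M : 'M[B]_1) (1%:M : 'M_1).
Proof.
have K1eq_mul_scalar (x y : B) :
    K1eq (x%:M : 'M_1) (1%:M : 'M_1) -> K1eq (y%:M : 'M_1) (1%:M : 'M_1) ->
    K1eq ((x * y)%:M : 'M_1) (1%:M : 'M_1).
  move=> x1 y1; have := K1eqM (invertible_mx1 B 1) x1 y1.
  by rewrite scalar_mxM mulmx1.
elim=> [|x a b w _ _ baw wba _ IH|x a b w y _ _ baw wba gy yg _ IH].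
- exact: K1eq_refl.
- exact/K1eq_mul_scalar/K1eq_jacobson_unit.
- apply: K1eq_mul_scalar => //.
  have := K1eq_mul1l (y%:M : 'M_1) (K1eq_jacobson_unit baw wba).
  by rewrite -scalar_mxM gy => /K1eq_sym.
Qed.

(** * Multiplicativity modulo C *)

Definition kerGL p (M : 'M[B]_p) := map_mx eps M = 1%:M.

Definition eps0_pair p (x : 'cV[B]_p) (y : 'rV[B]_p) :=
  map_mx eps x = 0 \/ map_mx eps y = 0.

Lemma kerGL1 p : kerGL (1%:M : 'M[B]_p).
Proof. exact: map_mx1. Qed.

Lemma kerGLM p (M N : 'M[B]_p) : kerGL M -> kerGL N -> kerGL (M *m N).
Proof. by rewrite /kerGL map_mxM => -> ->; rewrite mulmx1. Qed.

Lemma kerGL_rank1 p (x : 'cV[B]_p) (y : 'rV[B]_p) :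
  eps0_pair x y -> kerGL (1%:M + x *m y).
Proof.
by rewrite /kerGL map_mxD map_mxM map_mx1 => -[] ->; rewrite ?mul0mx ?mulmx0 addr0.
Qed.

Lemma kerGL_block p (a : B) (r : 'rV[B]_p) (c : 'cV[B]_p) (D : 'M[B]_p) :
  kerGL (block_mx a%:M r c D : 'M_(1 + p)) <->
  [/\ eps a = 1, map_mx eps r = 0, map_mx eps c = 0 & kerGL D].
Proof.
rewrite /kerGL map_block_mx map_scalar_mx (scalar_mx_block 1 p); split; last first.
  by case=> -> -> -> ->.
case/eq_block_mx => /matrixP/(_ 0 0); rewrite !mxE eqxx !mulr1n.
by move=> ea er ec eD; split.
Qed.

Lemma kerGL_split p (P : 'M[B]_(1 + p)) : kerGL P ->
  exists a r c D, P = block_mx a%:M r c D /\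
    [/\ eps a = 1, map_mx eps r = 0, map_mx eps c = 0 & kerGL D].
Proof.
rewrite [P]block_mx_split1 => /kerGL_block kP.
by exists (P 0 0), (ursubmx P), (dlsubmx P), (drsubmx P).
Qed.

Lemma kerGL_schur p (a w : B) (r : 'rV[B]_p) (c : 'cV[B]_p) (D : 'M[B]_p) :
  kerGL (block_mx a%:M r c D : 'M_(1 + p)) -> kerGL (D - c *m w%:M *m r).
Proof.
by case/kerGL_block=> _ _ ec kD; rewrite /kerGL map_mxB !map_mxM ec !mul0mx subr0.
Qed.

Lemma kerGL_eps00 p (P : 'M[B]_(1 + p)) : kerGL P -> eps (P 0 0) = 1.
Proof. by rewrite [P]block_mx_split1 => /kerGL_block[]; rewrite -block_mx_split1. Qed.

Lemma schur_det_eps1 p (M : 'M[B]_p) : kerGL M -> eps (schur_det M) = 1.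
Proof.
elim: p M => [|p IH] M; first by move=> _; apply: rmorph1.
move=> /[dup] /kerGL_split[a [r [c [D [-> [ea _ _ _]]]]]] kM.
by rewrite schur_det_block rmorphM ea mul1r IH //; apply: kerGL_schur kM.
Qed.

Lemma schur_det_lower p (z : 'cV[B]_p) (P : 'M[B]_(1 + p)) : eps (P 0 0) = 1 ->
  schur_det (block_mx 1%:M 0 z 1%:M *m P) = schur_det P.
Proof.
move=> eP; have [aai _] := eps1_unit eP.
rewrite [P]block_mx_split1 mulmx_block !mul1mx !mul0mx ?addr0 ?add0r !schur_det_block.
rewrite !mulmxDl -(mulmxA z) -scalar_mxM aai mulmx1 opprD addrACA subrr add0r.
by rewrite addrC.
Qed.

Lemma unit_invM (u a : B) : eps u = 1 -> eps a = 1 ->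
  unit_inv (u * a) * u = unit_inv a.
Proof.
move=> eu ea; have eua : eps (u * a) = 1 by rewrite rmorphM eu ea mulr1.
have [_ uaiua] := eps1_unit eua; have [aai _] := eps1_unit ea.
by apply/esym/(inv_uniq aai); rewrite -mulrA.
Qed.

Definition schur_det_multiplicative p := forall T S : 'M[B]_p,
  kerGL T -> kerGL S -> congC (schur_det (T *m S)) (schur_det T * schur_det S).

Definition schur_det_sylvester p := forall (x : 'cV[B]_p) (y : 'rV[B]_p),
  eps0_pair x y -> congC (schur_det (1%:M + x *m y)) (1 + (y *m x) 0 0).

Lemma schur_det_diag p (u : B) (V : 'M[B]_p) (P : 'M[B]_(1 + p)) :
  schur_det_multiplicative p -> eps u = 1 -> kerGL V -> kerGL P ->
  congC (schur_det (block_mx u%:M 0 0 V *m P)) (u * schur_det V * schur_det P).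
Proof.
move=> mulP eu kV /[dup] /kerGL_split[a [r [c [D [-> [ea _ _ _]]]]]] kP.
have kS := kerGL_schur (unit_inv a) kP.
rewrite mulmx_block !mul0mx ?addr0 ?add0r -scalar_mxM !schur_det_block.
have -> : V *m D - V *m c *m (unit_inv (u * a))%:M *m (u%:M *m r) =
    V *m (D - c *m (unit_inv a)%:M *m r).
  by rewrite mulmxBr !mulmxA -(mulmxA _ _ u%:M) -scalar_mxM unit_invM.
apply: congC_trans (congCMl _ (mulP _ _ kV kS)) _.
rewrite -!mulrA; apply: congCMl; rewrite !mulrA.
apply: congCMr (schur_det_eps1 kS) _.
exact: congC_comm (schur_det_eps1 kV).
Qed.

(* The Schur complement of block_mx 1 y 0 1 *m P is (1 - c a'^-1 y) times that
   of P, and Sylvester turns the first factor into a a'^-1 (with a' = a + yc). *)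
Lemma schur_det_upper p (y : 'rV[B]_p) (P : 'M[B]_(1 + p)) :
  schur_det_multiplicative p -> schur_det_sylvester p ->
  map_mx eps y = 0 -> kerGL P ->
  congC (schur_det (block_mx 1%:M y 0 1%:M *m P)) (schur_det P).
Proof.
move=> mulP sylP ey /[dup] /kerGL_split[a [r [c [D [-> [ea _ ec _]]]]]] kP.
have kS := kerGL_schur (unit_inv a) kP.
have et : eps ((y *m c) 0 0) = 0.
  by move/matrixP/(_ 0 0): (map_mxM eps y c); rewrite ey mul0mx !mxE.
set t := (y *m c) 0 0; set a' := a + t.
have ea' : eps a' = 1 by rewrite rmorphD ea et addr0.
have [a'a'i a'ia'] := eps1_unit ea'; have [aai _] := eps1_unit ea.
rewrite mulmx_block !mul1mx !mul0mx ?addr0 ?add0r [y *m c]mx11_scalar.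
rewrite -(raddfD scalar_mx) !schur_det_block -/t -/a'.
rewrite (schur_complement_upper _ _ (erefl a') aai a'ia') -mulNmx.
set x := - (c *m (unit_inv a')%:M).
have ex : map_mx eps x = 0 by rewrite map_mxN map_mxM ec mul0mx oppr0.
apply: congC_trans (congCMl _ (mulP _ _ (kerGL_rank1 (or_introl ex)) kS)) _.
rewrite mulrA; apply: congCMr (schur_det_eps1 kS) _.
apply: congC_trans (congCMl _ (sylP _ _ (or_introl ex))) _.
have -> : 1 + (y *m x) 0 0 = a * unit_inv a'.
  rewrite mulmxN mulmxA [y *m c]mx11_scalar -/t -scalar_mxM !mxE eqxx mulr1n.
  by rewrite -[in RHS](addrK t a) -/a' mulrBl a'a'i.
have eaa' : eps (a * unit_inv a') = 1 by rewrite rmorphM ea eps_unit_inv // mulr1.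
by apply: congC_trans (congC_comm ea' eaa') _; rewrite -mulrA a'ia' mulr1;
  apply: congC_refl.
Qed.

Lemma schur_det_multiplicativeS p :
  schur_det_multiplicative p -> schur_det_sylvester p -> schur_det_multiplicative p.+1.
Proof.
move=> mulP sylP; change (schur_det_multiplicative (1 + p)) => T S'.
move=> /[dup] /kerGL_split[a [r [c [D [-> [ea er ec _]]]]]] kT kS'.
have [aai aia] := eps1_unit ea; have kS := kerGL_schur (unit_inv a) kT.
have kU : kerGL (block_mx 1%:M ((unit_inv a)%:M *m r) 0 1%:M : 'M_(1 + p)).
  by apply/kerGL_block; rewrite rmorph1 map_mxM er mulmx0 map_mx0; split=> //; apply: kerGL1.
have kDg : kerGL (block_mx a%:M 0 0 (D - c *m (unit_inv a)%:M *m r) : 'M_(1 + p)).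
  by apply/kerGL_block; rewrite !map_mx0; split.
rewrite schur_det_block (block_mx_LDU _ _ _ aai aia).
rewrite -[_ *m _ *m S']mulmxA -[_ *m _ *m (_ *m S')]mulmxA schur_det_lower; last first.
  exact: kerGL_eps00 (kerGLM kDg (kerGLM kU kS')).
apply: congC_trans (schur_det_diag mulP ea kS (kerGLM kU kS')) _.
by apply: congCMl; apply: schur_det_upper; rewrite // map_mxM er mulmx0.
Qed.

Lemma eps0_pair_split p (s q : B) (x' : 'cV[B]_p) (y' : 'rV[B]_p) :
  eps0_pair (col_mx s%:M x' : 'cV_(1 + p)) (row_mx q%:M y') ->
  [/\ eps (s * q) = 0, eps (q * s) = 0 & eps0_pair x' y'].
Proof.
rewrite /eps0_pair map_col_mx map_row_mx !map_scalar_mx -col_mx0 -row_mx0.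
case=> [/eq_col_mx[] | /eq_row_mx[]] /matrixP/(_ 0 0); rewrite !mxE eqxx mulr1n => e0 e'.
  by split; rewrite ?rmorphM ?e0 ?mulr0 ?mul0r //; left.
by split; rewrite ?rmorphM ?e0 ?mulr0 ?mul0r //; right.
Qed.

Lemma eps0_pair_entry p (x : 'cV[B]_p) (y : 'rV[B]_p) :
  eps0_pair x y -> eps ((y *m x) 0 0) = 0.
Proof.
move/matrixP/(_ 0 0): (map_mxM eps y x) => /[swap].
by case=> ->; rewrite ?mulmx0 ?mul0mx !mxE.
Qed.

Lemma eps0_pairMr p (x : 'cV[B]_p) (y : 'rV[B]_p) (w : B) :
  eps0_pair x y -> eps0_pair (x *m w%:M) y.
Proof. by case=> [x0|]; [left; rewrite map_mxM x0 mul0mx | right]. Qed.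

(* The first Schur complement of 1 + xy is 1 + x' (1 + qs)^-1 y'; the swap
   1 + sq ~ 1 + qs modulo C then gives 1 + yx. *)
Lemma schur_det_sylvesterS p : schur_det_sylvester p -> schur_det_sylvester p.+1.
Proof.
move=> sylP; change (schur_det_sylvester (1 + p)) => x y.
rewrite -[x]vsubmxK -[y]hsubmxK [usubmx x]mx11_scalar [lsubmx y]mx11_scalar.
move: (usubmx x 0 0) (dsubmx x) (lsubmx y 0 0) (rsubmx y) => s x' q y'.
move=> /eps0_pair_split[sq0 qs0 xy0].
have esq : eps (1 + s * q) = 1 by rewrite rmorphD sq0 rmorph1 addr0.
have [sqai aisq] := eps1_unit esq; set ai := unit_inv (1 + s * q) in sqai aisq *.
have [qsbe beqs] := jacobson_inverse sqai aisq; set be := 1 - q * ai * s in qsbe beqs.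
rewrite mul_col_row mul_row_col (scalar_mx_block 1 p) add_block_mx.
rewrite -scalar_mxM -(raddfD scalar_mx) !add0r schur_det_block -/ai.
have -> : 1%:M + x' *m y' - x' *m q%:M *m ai%:M *m (s%:M *m y') =
    1%:M + (x' *m be%:M) *m y'.
  rewrite -addrA; congr (_ + _).
  have beE : be%:M = 1%:M - q%:M *m ai%:M *m s%:M :> 'M_1.
    by rewrite /be -!scalar_mxM (raddfB scalar_mx).
  by rewrite beE mulmxBr mulmx1 mulmxBl !mulmxA.
apply: congC_trans (congCMl _ (sylP _ _ (eps0_pairMr be xy0))) _.
set v := (y' *m x') 0 0.
rewrite mulmxA [y' *m x']mx11_scalar -/v -!scalar_mxM -(raddfD scalar_mx) !scalar_mx11E.
have ev : eps (1 + v * be) = 1.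
  by rewrite rmorphD rmorphM eps0_pair_entry // mul0r addr0 rmorph1.
have eqs : eps (1 + q * s) = 1 by rewrite rmorphD qs0 rmorph1 addr0.
apply: congC_trans (congCMr ev (congC_swap qs0 sq0 sqai aisq)) _.
apply: congC_trans (congC_comm eqs ev) _.
by rewrite mulrDl mul1r -mulrA beqs mulr1 addrA; apply: congC_refl.
Qed.

Lemma schur_det_multiplicative_sylvester p :
  schur_det_multiplicative p /\ schur_det_sylvester p.
Proof.
elim: p => [|p [mulP sylP]].
  split=> [T S _ _ | x y _]; rewrite /= ?mulr1 ?mxE ?big_ord0 ?addr0; apply: congC_refl.
by split; [apply: schur_det_multiplicativeS | apply: schur_det_sylvesterS].
Qed.

Lemma schur_detM p (T S : 'M[B]_p) : kerGL T -> kerGL S ->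
  congC (schur_det (T *m S)) (schur_det T * schur_det S).
Proof. exact: (schur_det_multiplicative_sylvester p).1. Qed.

Lemma schur_det_rank1 p (x : 'cV[B]_p) (y : 'rV[B]_p) : eps0_pair x y ->
  congC (schur_det (1%:M + x *m y)) (1 + (y *m x) 0 0).
Proof. exact: (schur_det_multiplicative_sylvester p).2. Qed.

Inductive rank1_prod p : 'M[B]_p -> Prop :=
| rank1_prod1 : rank1_prod 1%:M
| rank1_prodS x y Q : eps0_pair x y -> rank1_prod Q -> rank1_prod ((1%:M + x *m y) *m Q).

Lemma rank1_prod_kerGL p (Q : 'M[B]_p) : rank1_prod Q -> kerGL Q.
Proof.
elim=> [|x y Q' xy0 _ kQ']; first exact: kerGL1.
exact: kerGLM (kerGL_rank1 xy0) kQ'.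
Qed.

Lemma rank1_prodM p (Q1 Q2 : 'M[B]_p) : rank1_prod Q1 -> rank1_prod Q2 -> rank1_prod (Q1 *m Q2).
Proof.
move=> + rQ2; elim=> [|x y Q xy0 _ IH]; first by rewrite mul1mx.
by rewrite -mulmxA; apply: rank1_prodS.
Qed.

Lemma rank1_prod_rank1 p (x : 'cV[B]_p) (y : 'rV[B]_p) :
  eps0_pair x y -> rank1_prod (1%:M + x *m y).
Proof.
by move=> xy0; rewrite -[X in rank1_prod X]mulmx1; apply: rank1_prodS => //;
  apply: rank1_prod1.
Qed.

Lemma rank1_prod_block1 p (Q : 'M[B]_p) :
  rank1_prod Q -> rank1_prod (block_mx 1%:M 0 0 Q : 'M_(1 + p)).
Proof.
elim=> [|x y Q' xy0 _ IH]; first by rewrite -scalar_mx_block; apply: rank1_prod1.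
have -> : block_mx 1%:M 0 0 ((1%:M + x *m y) *m Q') =
    (1%:M + col_mx 0 x *m row_mx 0 y) *m (block_mx 1%:M 0 0 Q' : 'M_(1 + p)).
  rewrite mul_col_row !mulmx0 !mul0mx (scalar_mx_block 1 p) add_block_mx !addr0.
  by rewrite mulmx_block !mul0mx !mulmx0 !addr0 !add0r mulmx1.
apply: rank1_prodS => //; rewrite /eps0_pair map_col_mx map_row_mx map_mx0.
by case: xy0 => ->; [left; rewrite col_mx0 | right; rewrite row_mx0].
Qed.

Lemma kerGL_rank1_prod p (P : 'M[B]_p) : kerGL P -> rank1_prod P.
Proof.
elim: p P => [|p IH] P.
  by rewrite (flatmx0 P) -(flatmx0 1%:M) => _; apply: rank1_prod1.
change (@kerGL (1 + p) P -> @rank1_prod (1 + p) P).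
move=> /[dup] /kerGL_split[a [r [c [D [-> [ea er ec _]]]]]] kP.
have [aai aia] := eps1_unit ea; set S := D - c *m (unit_inv a)%:M *m r.
have kS : kerGL S by apply: kerGL_schur kP.
rewrite (block_mx_LDU _ _ _ aai aia) -/S.
have -> : block_mx a%:M 0 0 S =
    (block_mx a%:M 0 0 1%:M : 'M_(1 + p)) *m block_mx 1%:M 0 0 S.
  by rewrite mulmx_block !mulmx0 !mul0mx !addr0 !add0r mulmx1 mul1mx.
rewrite lower_elem_rank1 diag_elem_rank1 upper_elem_rank1.
apply: rank1_prodM; first (apply: rank1_prodM; last apply: rank1_prodM).
all: try (apply: rank1_prod_rank1; rewrite /eps0_pair).
- by left; rewrite map_col_mx map_mxM ec mul0mx map_mx0 col_mx0.
- left; rewrite map_col_mx map_scalar_mx rmorphB ea rmorph1 subrr raddf0.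
  by rewrite map_mx0 col_mx0.
- exact/rank1_prod_block1/IH.
- by right; rewrite map_row_mx map_mxM er mulmx0 map_mx0 row_mx0.
Qed.

Lemma kerGL_conj p (h hi P : 'M[B]_p) : mx_inverse h hi -> kerGL P -> kerGL (h *m P *m hi).
Proof. by move=> [hhi _] kP; rewrite /kerGL !map_mxM kP mulmx1 -map_mxM hhi map_mx1. Qed.

(* It suffices to check invariance on the factors 1 + xy, where Sylvester
   reduces it to (y hi)(h x) = yx. *)
Lemma schur_det_conj p (h hi P : 'M[B]_p) : mx_inverse h hi -> kerGL P ->
  congC (schur_det (h *m P *m hi)) (schur_det P).
Proof.
move=> ih /kerGL_rank1_prod; elim=> [|x y Q xy0 rQ IH].
  by case: ih => hhi _; rewrite mulmx1 hhi; apply: congC_refl.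
have kQ := rank1_prod_kerGL rQ; have kF := kerGL_rank1 xy0.
have [hhi hih] := ih.
have -> : h *m ((1%:M + x *m y) *m Q) *m hi =
    (h *m (1%:M + x *m y) *m hi) *m (h *m Q *m hi).
  by rewrite !mulmxA -(mulmxA _ hi h) hih mulmx1.
apply: congC_trans (schur_detM (kerGL_conj ih kF) (kerGL_conj ih kQ)) _.
apply: congC_trans _ (congC_sym (schur_detM kF kQ)).
apply: congC_trans (congCMl _ IH) _; apply: congCMr (schur_det_eps1 kQ) _.
have -> : h *m (1%:M + x *m y) *m hi = 1%:M + (h *m x) *m (y *m hi).
  by rewrite mulmxDr mulmxDl mulmx1 hhi !mulmxA.
have xy0' : eps0_pair (h *m x) (y *m hi).
  by case: xy0 => e0; [left; rewrite map_mxM e0 mulmx0 | right; rewrite map_mxM e0 mul0mx].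
apply: congC_trans (schur_det_rank1 xy0') _.
apply: congC_sym; apply: congC_trans (schur_det_rank1 xy0) _.
by rewrite !mulmxA -(mulmxA y) hih mulmx1; apply: congC_refl.
Qed.

(** * The decomposition of K_1(B) *)

Variable j : {rmorphism A -> B}.
Hypothesis eps_j : forall a : A, eps (j a) = a.

Definition lift_eps p (M : 'M[B]_p) := map_mx j (map_mx eps M).

(* The eps^-1(1)/C component of [M], read off from the factor of M in kerGL. *)
Definition reldet p (M : 'M[B]_p) : B := schur_det (mx_inv (lift_eps M) *m M).

Lemma map_mx_eps_j m n (M : 'M[A]_(m, n)) : map_mx eps (map_mx j M) = M.
Proof. by apply/matrixP=> i k; rewrite !mxE eps_j. Qed.

Lemma mx_inverse_lift_eps p (M Mi : 'M[B]_p) :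
  mx_inverse M Mi -> mx_inverse (lift_eps M) (lift_eps Mi).
Proof. by move=> iM; apply/mx_inverse_map/mx_inverse_map. Qed.

Lemma kerGL_reldet p (M : 'M[B]_p) : invertible_mx M ->
  kerGL (mx_inv (lift_eps M) *m M).
Proof.
move=> [Mi iM]; rewrite (mx_invE (mx_inverse_lift_eps iM)) /kerGL map_mxM.
by rewrite map_mx_eps_j -map_mxM; case: iM => _ ->; apply: map_mx1.
Qed.

Lemma reldet_eps1 p (M : 'M[B]_p) : invertible_mx M -> eps (reldet M) = 1.
Proof. by move=> iM; apply/schur_det_eps1/kerGL_reldet. Qed.

Lemma reldetM p (M N : 'M[B]_p) : invertible_mx M -> invertible_mx N ->
  congC (reldet (M *m N)) (reldet M * reldet N).
Proof.
move=> iM iN; have kP := kerGL_reldet iM; have kQ := kerGL_reldet iN.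
case: iM iN kP kQ => [Mi iM] [Ni iN].
have iLN := mx_inverse_lift_eps iN; have iLM := mx_inverse_lift_eps iM.
rewrite /reldet /lift_eps !map_mxM -!/(lift_eps _).
rewrite (mx_invE (mx_inverseM iLM iLN)) !(mx_invE iLM) !(mx_invE iLN) => kP kQ.
have -> : lift_eps Ni *m lift_eps Mi *m (M *m N) =
    (lift_eps Ni *m (lift_eps Mi *m M) *m lift_eps N) *m (lift_eps Ni *m N).
  by case: iLN => LNLNi _; rewrite !mulmxA -(mulmxA _ (lift_eps N)) LNLNi mulmx1.
apply: congC_trans (schur_detM (kerGL_conj (mx_inverse_sym iLN) kP) kQ) _.
exact: congCMr (schur_det_eps1 kQ) (schur_det_conj (mx_inverse_sym iLN) kP).
Qed.

Lemma reldet_mx_inv p (M : 'M[B]_p) : mx_inv (lift_eps M) *m M = 1%:M -> reldet M = 1.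
Proof. by rewrite /reldet => ->; apply: schur_det1. Qed.

Lemma reldet1 p : reldet (1%:M : 'M[B]_p) = 1.
Proof.
apply: reldet_mx_inv; rewrite mulmx1 /lift_eps !map_mx1.
exact/mx_invE/mx_inverse1.
Qed.

Lemma reldet_comm p (g h : 'M[B]_p) : invertible_mx g -> invertible_mx h ->
  congC (reldet (g *m h)) (reldet (h *m g)).
Proof.
move=> ig ih; apply: congC_trans (reldetM ig ih) _.
apply: congC_trans (congC_comm (reldet_eps1 ig) (reldet_eps1 ih)) _.
exact/congC_sym/reldetM.
Qed.

Lemma reldet_commutator p (g gi h hi : 'M[B]_p) : mx_inverse g gi -> mx_inverse h hi ->
  congC (reldet (g *m h *m gi *m hi)) 1.
Proof.
move=> ig ih.
have igh : invertible_mx (g *m h) by exists (hi *m gi); apply: mx_inverseM.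
have ihg : invertible_mx (h *m g) by exists (gi *m hi); apply: mx_inverseM.
have igihi : invertible_mx (gi *m hi).
  by exists (h *m g); apply: mx_inverseM; apply: mx_inverse_sym.
have ig' : invertible_mx g by exists gi.
have ih' : invertible_mx h by exists hi.
rewrite -mulmxA; apply: congC_trans (reldetM igh igihi) _.
apply: congC_trans (congCMr (reldet_eps1 igihi) (reldet_comm ig' ih')) _.
apply: congC_trans (congC_sym (reldetM ihg igihi)) _.
case: ig ih => gg1 _ [hh1 _].
by rewrite mulmxA -(mulmxA h) gg1 mulmx1 hh1 reldet1; apply: congC_refl.
Qed.

Lemma reldet_commprod p (X : 'M[B]_p) : commprod X -> congC (reldet X) 1.
Proof.
elim=> [|X' g gi h hi gg1 gg2 hh1 hh2 cX' IH].
  by rewrite reldet1; apply: congC_refl.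
have [X'i _ iX'] := commprod_inverse cX'.
have ic := mx_inverse_commutator (conj gg1 gg2) (conj hh1 hh2).
apply: congC_trans (reldetM (ex_intro _ _ iX') (ex_intro _ _ ic)) _.
apply: congC_trans (congCMr (reldet_eps1 (ex_intro _ _ ic)) IH) _.
by rewrite mul1r; apply: reldet_commutator.
Qed.

Lemma reldet_eq_mod_comm p (M N : 'M[B]_p) : invertible_mx N -> eq_mod_comm M N ->
  congC (reldet M) (reldet N).
Proof.
move=> iN [X [cX ->]]; have [Xi _ iX] := commprod_inverse cX.
apply: congC_trans (reldetM (ex_intro _ _ iX) iN) _.
by rewrite -[X in congC _ X]mul1r; apply: congCMr (reldet_eps1 iN) (reldet_commprod cX).
Qed.

Lemma schur_det_stab_scalar p (u : B) : (0 < p)%N ->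
  schur_det (stab p (u%:M : 'M[B]_1)) = u.
Proof.
move=> /subnKC <-; rewrite stab_addn schur_det_block !mul0mx subr0 schur_det1.
exact: mulr1.
Qed.

Lemma reldet_stab_Phi p n (x : 'M[A]_n) (u : B) : invertible_mx x -> eps u = 1 ->
  (n < p)%N -> congC (reldet (stab p (Phi j x u))) u.
Proof.
move=> [xi ix] eu lt_np; have le_np := ltnW lt_np.
have lt0p := leq_ltn_trans (leq0n n) lt_np.
rewrite /Phi stabM // (stab_stab _ (leqnSn n) lt_np) (stab_stab _ (ltn0Sn n) lt_np).
have iJ := mx_inverse_stab le_np (mx_inverse_map j ix).
have iU : invertible_mx (stab p (u%:M : 'M[B]_1)).
  have [uui uiu] := eps1_unit eu; exists (stab p ((unit_inv u)%:M : 'M_1)).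
  by apply: (mx_inverse_stab lt0p); split; rewrite -scalar_mxM ?uui ?uiu.
apply: congC_trans (reldetM (ex_intro _ _ iJ) iU) _.
rewrite reldet_mx_inv; last first.
  rewrite /lift_eps map_stab map_mx_eps_j map_stab (mx_invE iJ).
  by case: iJ => _ ->.
rewrite mul1r /reldet /lift_eps !map_stab !map_scalar_mx eu rmorph1 stab1 //.
by rewrite (mx_invE (mx_inverse1 _ _)) mul1mx schur_det_stab_scalar //; apply: congC_refl.
Qed.

Lemma kerGL_invertible p (M : 'M[B]_p) : kerGL M -> invertible_mx M.
Proof. by move=> kM; apply: eps_local; rewrite kM; exists 1%:M; rewrite mulmx1. Qed.

Lemma K1eq_mx22_diag (a v : B) : eps a = 1 -> eps v = 1 ->
  K1eq (mx22 a 0 0 v) ((a * v)%:M : 'M_1).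
Proof.
move=> ea ev; have eav : eps (a * v) = 1 by rewrite rmorphM ea ev mulr1.
have [vvi viv] := eps1_unit ev; have [avi iav] := eps1_unit eav.
have -> : mx22 a 0 0 v = mx22 (a * v) 0 0 1 *m mx22 (unit_inv v) 0 0 v.
  by rewrite mul_mx22 !(mulr0, mul0r, addr0, add0r, mul1r) -mulrA vvi mulr1.
have iav1 : invertible_mx (mx22 (a * v) 0 0 1).
  by exists (mx22 (unit_inv (a * v)) 0 0 1); apply: mx_inverse_mx22_diag; rewrite ?mulr1.
apply: K1eq_trans (K1eq_mul1r iav1 (K1eq_mx22_diag_inv vvi viv)) _.
exact/K1eq_sym/K1eq_scalar_mx22.
Qed.

Lemma K1eq_schur_det p (P : 'M[B]_p) : kerGL P -> K1eq P ((schur_det P)%:M : 'M_1).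
Proof.
elim: p P => [|p IH] P.
  by rewrite (flatmx0 P) -(flatmx0 1%:M) => _; apply: K1eq_scalar1.
change (@kerGL (1 + p) P -> K1eq (P : 'M_(1 + p)) ((schur_det (P : 'M_(1 + p)))%:M : 'M_1)).
move=> /[dup] /kerGL_split[a [r [c [D [-> [ea er ec _]]]]]] kP.
have [aai aia] := eps1_unit ea; set S := D - c *m (unit_inv a)%:M *m r.
have kS : kerGL S by apply: kerGL_schur kP.
rewrite schur_det_block -/S (block_mx_LDU _ _ _ aai aia) -/S.
have kLDg : kerGL (block_mx 1%:M 0 (c *m (unit_inv a)%:M) 1%:M *m block_mx a%:M 0 0 S).
  apply: kerGLM; apply/kerGL_block; rewrite ?rmorph1 ?map_mx0 ?map_mxM ?ec ?mul0mx //.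
  by split=> //; apply: kerGL1.
apply: K1eq_trans (K1eq_mul1r (kerGL_invertible kLDg) (K1eq_elem_upper _)) _.
apply: K1eq_trans (K1eq_mul1l _ (K1eq_elem_lower _)) _.
have -> : block_mx a%:M 0 0 S =
    (block_mx a%:M 0 0 1%:M : 'M_(1 + p)) *m block_mx 1%:M 0 0 S.
  by rewrite mulmx_block !mulmx0 !mul0mx !addr0 !add0r mulmx1 mul1mx.
have ia : invertible_mx (mx22 a 0 0 1).
  by exists (mx22 (unit_inv a) 0 0 1); apply: mx_inverse_mx22_diag; rewrite ?mulr1.
have aE := K1eq_trans (K1eq_block_scalar p a) (K1eq_scalar_mx22 a).
apply: K1eq_trans (K1eqM ia aE (K1eq_block1 (IH _ kS))) _.
have -> : block_mx 1%:M 0 0 (schur_det S)%:M = mx22 1 0 0 (schur_det S).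
  by rewrite /mx22 raddf0.
rewrite mul_mx22 !(mulr0, mul0r, addr0, add0r, mulr1, mul1r).
exact: K1eq_mx22_diag (schur_det_eps1 kS).
Qed.

Lemma K1eq_congC (u u' : B) : eps u = 1 -> congC u u' ->
  K1eq (u%:M : 'M_1) (u'%:M : 'M_1).
Proof.
move=> eu [c [Cc ->]]; have [uui uiu] := eps1_unit eu.
have iu : invertible_mx (u%:M : 'M_1).
  by exists (unit_inv u)%:M; split; rewrite -scalar_mxM ?uui ?uiu.
have := K1eqM iu (K1eq_refl (u%:M : 'M_1)) (K1eq_sym (K1eq_inC Cc)).
by rewrite -!scalar_mxM mulr1.
Qed.

Lemma invertible_Phi n (x : 'M[A]_n) (u : B) : invertible_mx x -> eps u = 1 ->
  invertible_mx (Phi j x u).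
Proof.
move=> [xi ix] eu; have [uui uiu] := eps1_unit eu.
exists (stab n.+1 ((unit_inv u)%:M : 'M_1) *m stab n.+1 (map_mx j xi)).
apply: mx_inverseM; apply: mx_inverse_stab => //; first exact: mx_inverse_map.
by split; rewrite -scalar_mxM ?uui ?uiu.
Qed.

Lemma K1eq_Phi n m (x : 'M[A]_n) (x' : 'M[A]_m) (u u' : B) :
  invertible_mx x' -> eps u = 1 -> K1eq x x' -> congC u u' ->
  K1eq (Phi j x u) (Phi j x' u').
Proof.
move=> [xi' ix'] eu xx' uu'; apply: K1eqM.
- exists (stab m.+1 (map_mx j xi')).
  exact/mx_inverse_stab/mx_inverse_map.
- apply: K1eq_trans (K1eq_stab _ (leqnSn n)) _.
  apply: K1eq_trans (K1eq_map j xx') _.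
  exact/K1eq_sym/K1eq_stab.
- apply: K1eq_trans (K1eq_stab _ (ltn0Sn n)) _.
  apply: K1eq_trans (K1eq_congC eu uu') _.
  exact/K1eq_sym/K1eq_stab.
Qed.

Lemma PhiM n (x x' : 'M[A]_n) (u u' : B) :
  invertible_mx x -> invertible_mx x' -> eps u = 1 ->
  K1eq (Phi j (x *m x') (u * u')) (Phi j x u *m Phi j x' u').
Proof.
move=> [xi ix] [xi' ix'] eu; have [uui uiu] := eps1_unit eu.
rewrite /Phi map_mxM scalar_mxM !stabM //; apply: K1eq_of_eq_mod_comm.
set J := stab _ (map_mx j x); set J' := stab _ (map_mx j x').
set U := stab _ (u%:M : 'M_1); set U' := stab _ (u'%:M : 'M_1).
have iJ : mx_inverse J (stab n.+1 (map_mx j xi)) by exact/mx_inverse_stab/mx_inverse_map.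
have iJ' : mx_inverse J' (stab n.+1 (map_mx j xi')) by exact/mx_inverse_stab/mx_inverse_map.
have iU : mx_inverse U (stab n.+1 ((unit_inv u)%:M : 'M_1)).
  by apply: mx_inverse_stab => //; split; rewrite -scalar_mxM ?uui ?uiu.
rewrite !mulmxA -!(mulmxA J); apply: (eq_mod_commMl iJ); apply: eq_mod_commMr.
exact: eq_mod_comm_commute iJ' iU.
Qed.

Lemma map_eps_Phi n (x : 'M[A]_n) (u : B) : eps u = 1 ->
  map_mx eps (Phi j x u) = stab n.+1 x.
Proof.
move=> eu; rewrite /Phi map_mxM !map_stab map_mx_eps_j map_scalar_mx eu stab1 //.
exact: mulmx1.
Qed.

Lemma Phi_inj n m (x : 'M[A]_n) (x' : 'M[A]_m) (u u' : B) :
  invertible_mx x -> invertible_mx x' -> eps u = 1 -> eps u' = 1 ->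
  K1eq (Phi j x u) (Phi j x' u') -> K1eq x x' /\ congC u u'.
Proof.
move=> ix ix' eu eu' PP'; split.
  have := K1eq_map eps PP'; rewrite !map_eps_Phi // => xx'.
  apply: K1eq_trans (K1eq_sym (K1eq_stab x (leqnSn n))) _.
  exact: K1eq_trans xx' (K1eq_stab _ (leqnSn m)).
have [p [_ lt_np lt_mp ePP']] := K1eq_ge 0 PP'.
apply: congC_trans (congC_sym (reldet_stab_Phi ix eu lt_np)) _.
apply: congC_trans (reldet_stab_Phi ix' eu' lt_mp).
apply: reldet_eq_mod_comm ePP'; have [Ni iN] := invertible_Phi ix' eu'.
by exists (stab p Ni); apply: mx_inverse_stab.
Qed.

Lemma Phi_surj m (y : 'M[B]_m) : invertible_mx y ->
  exists n (x : 'M[A]_n) (u : B), [/\ invertible_mx x, eps u = 1 & K1eq y (Phi j x u)].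
Proof.
move=> [yi iy]; have kP := kerGL_reldet (ex_intro _ _ iy).
set P := mx_inv (lift_eps y) *m y in kP.
have iL := mx_inverse_lift_eps iy.
exists m, (map_mx eps y), (schur_det P); split.
- by exists (map_mx eps yi); apply: mx_inverse_map.
- exact: schur_det_eps1.
have {1}-> : y = lift_eps y *m P.
  by rewrite /P (mx_invE iL) mulmxA; case: iL => -> _; rewrite mul1mx.
apply: K1eqM.
- exists (stab m.+1 (lift_eps yi)).
  exact/mx_inverse_stab/iL.
- exact/K1eq_sym/K1eq_stab.
- apply: K1eq_trans (K1eq_schur_det kP) _.
  exact/K1eq_sym/K1eq_stab.
Qed.

End LocalAugmentation.

Theorem mainTheorem2 (A B : pzRingType)
  (eps : {rmorphism B -> A}) (j : {rmorphism A -> B})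
  (hsec : forall a : A, eps (j a) = a)
  (hloc : local_hom eps) :
  (* C is a normal subgroup of eps^{-1}(1) *)
  ((forall c : B, inC eps c -> eps c = 1) /\
   (forall u ui c : B, eps u = 1 -> u * ui = 1 -> ui * u = 1 ->
      inC eps c -> inC eps (u * c * ui))) /\
  (* the map (x, uC) |-> j_*[x] [(u)] is well defined ... *)
  (forall (n m : nat) (x : 'M[A]_n) (x' : 'M[A]_m) (u u' : B),
      invertible_mx x -> invertible_mx x' -> eps u = 1 -> eps u' = 1 ->
      K1eq x x' -> (exists c, inC eps c /\ u' = u * c) ->
      K1eq (Phi j x u) (Phi j x' u')) /\
  (* ... a group homomorphism ... *)
  (forall (n : nat) (x x' : 'M[A]_n) (u u' : B),
      invertible_mx x -> invertible_mx x' -> eps u = 1 -> eps u' = 1 ->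
      K1eq (Phi j (x *m x') (u * u')) (Phi j x u *m Phi j x' u')) /\
  (* ... injective ... *)
  (forall (n m : nat) (x : 'M[A]_n) (x' : 'M[A]_m) (u u' : B),
      invertible_mx x -> invertible_mx x' -> eps u = 1 -> eps u' = 1 ->
      K1eq (Phi j x u) (Phi j x' u') ->
      K1eq x x' /\ (exists c, inC eps c /\ u' = u * c)) /\
  (* ... and surjective onto K_1(B). *)
  (forall (m : nat) (y : 'M[B]_m), invertible_mx y ->
      exists (n : nat) (x : 'M[A]_n) (u : B),
        [/\ invertible_mx x, eps u = 1 & K1eq y (Phi j x u)]).
Proof.
split; first by split=> [c Cc | u ui c eu uui uiu Cc];
  [exact: inC_eps1 | exact: inC_conj].
split; first by move=> n m x x' u u' _ ix' eu _; apply: K1eq_Phi.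
split; first by move=> n x x' u u' ix ix' eu _; exact: (PhiM hloc j u' ix ix' eu).
split; first by move=> n m x x' u u' ix ix' eu eu'; apply: Phi_inj.
exact: Phi_surj.
Qed.
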